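(* Let $a_0,b_0,C_0,C_1,g_3,z_0$ be complex constants with $b_0\neq0$, put $$g_2=\frac{C_0^2+24C_1b_0}{12b_0^2},$$ and let $R(z)=\wp(z-z_0;g_2,g_3)$. Then the function $$y(z)=-\frac{C_0}{12b_0}+R(z)$$ is a solution of the third order ordinary differential equation $$a_0y_{zzz}-12a_0yy_z+b_0y_{zz}-\frac{a_0C_0}{b_0}y_z-6b_0y^2-C_0y+C_1=0 .$$
   Context: $\wp(z;g_2,g_3)$ denotes the Weierstrass elliptic function with invariants $g_2,g_3$, the general solution (up to translation of $z$) of $R_z^2-4R^3+g_2R+g_3=0$; subscripts $z$ denote derivatives with respect to $z$. *)

From Stdlib Require Import Reals.
From Coquelicot Require Export Coquelicot.
Open Scope C_scope.

Definition Cderiv (f : C -> C) (z l : C) : Prop :=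
  @is_derive C_AbsRing C_NormedModule f z l.

Definition Copen (D : C -> Prop) : Prop := @open C_UniformSpace D.

Definition Cconnected (D : C -> Prop) : Prop :=
  forall U V : C -> Prop, Copen U -> Copen V ->
    (forall z, D z -> U z \/ V z) ->
    (exists z, D z /\ U z) -> (exists z, D z /\ V z) ->
    exists z, D z /\ U z /\ V z.

(* P is (a branch on the domain D of) the Weierstrass function wp(z; g2, g3):
   a non-constant holomorphic solution on the open connected set D of
   P_z^2 = 4 P^3 - g2 P - g3.  P' is its derivative. *)
Definition is_wp_on (g2 g3 : C) (D : C -> Prop) (P P' : C -> C) : Prop :=
  Copen D /\ Cconnected D /\ (exists z, D z) /\
  (forall z, D z -> Cderiv P z (P' z)) /\
  (exists z1 z2, D z1 /\ D z2 /\ P z1 <> P z2) /\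
  (forall z, D z -> P' z * P' z = 4 * (P z * P z * P z) - g2 * P z - g3).

From Stdlib Require Import Reals Lra Psatz Classical.
From Coquelicot Require Import Coquelicot.
Open Scope C_scope.

(* With [y = P - C0 / (12 b0)] and the given value of [g2], the equation becomes
   [a0 (P''' - 12 P P') + b0 (P'' - 6 P^2 + g2 / 2) = 0], so it suffices to show that [P'] is
   differentiable with [P'' = F'(P) / 2 = 6 P^2 - g2 / 2], where [F x = 4 x^3 - g2 x - g3];
   then [P''' = 12 P P'].  A priori [P'] is only some function with [P'^2 = F (P)].
   Where [P' <> 0], a Darboux argument along segments shows that [P'] is a continuous branch
   of [sqrt (F (P))], and differentiating [P'^2 = F (P)] gives [P''].  Where [P' = 0] at a
   double root of [F], [|P'| <= K |P - P z|] and a Gronwall iteration makes [P] locally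
   constant.  Where [P' = 0] at a simple root, [P'] has derivative close to [F'(P) / 2 <> 0]
   wherever it does not vanish, so by the mean value inequality either the zero is isolated,
   which yields [P'' = F'(P) / 2] there, or [P'] vanishes on a disc.  Since [D] is connected
   and [P] is not constant, [P] is nowhere locally constant, which rules out the other cases. *)

Definition Cdiff (f : C -> C) (z l : C) : Prop :=
  forall eps : R, 0 < eps -> exists d : R, 0 < d /\
    forall y, Cmod (y - z) < d -> Cmod (f y - f z - (y - z) * l) <= eps * Cmod (y - z).

Definition Ccont (f : C -> C) (z : C) : Prop :=
  forall eps : R, 0 < eps -> exists d : R, 0 < d /\
    forall y, Cmod (y - z) < d -> Cmod (f y - f z) < eps.

Lemma Cdiff_is_derive f z l :
  Cdiff f z l <-> @is_derive C_AbsRing (AbsRing_NormedModule C_AbsRing) f z l.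
Proof.
  split.
  - intros H. split; [apply is_linear_scal_l|].
    intros x Hx.
    apply (is_filter_lim_locally_unique (K:=C_AbsRing) (V:=AbsRing_NormedModule C_AbsRing)) in Hx.
    subst x. intros eps.
    apply (locally_norm_le_locally (K:=C_AbsRing) (V:=AbsRing_NormedModule C_AbsRing)).
    destruct (H eps (cond_pos eps)) as [d [Hd H']].
    exists (mkposreal d Hd). exact H'.
  - intros [_ H] eps He.
    specialize (H z (fun P HP => HP) (mkposreal eps He)).
    apply (locally_le_locally_norm (K:=C_AbsRing) (V:=AbsRing_NormedModule C_AbsRing) z) in H.
    destruct H as [d Hd].
    exists d. split; [apply cond_pos | exact Hd].
Qed.

Lemma Cderiv_Cdiff f z l : Cderiv f z l <-> Cdiff f z l.
Proof.
  rewrite Cdiff_is_derive.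
  split; intros [_ H]; (split; [apply is_linear_scal_l | exact H]).
Qed.

Lemma Cdiff_val f z l l' : l = l' -> Cdiff f z l -> Cdiff f z l'.
Proof. now intros <-. Qed.

Lemma Cdiff_const (c : C) z : Cdiff (fun _ => c) z 0.
Proof. apply Cdiff_is_derive, (is_derive_const (V := AbsRing_NormedModule C_AbsRing)). Qed.

Lemma Cdiff_id z : Cdiff (fun x => x) z 1.
Proof. apply Cdiff_is_derive, (is_derive_id (K := C_AbsRing)). Qed.

Lemma Cdiff_plus f g z df dg :
  Cdiff f z df -> Cdiff g z dg -> Cdiff (fun x => f x + g x) z (df + dg).
Proof.
  rewrite !Cdiff_is_derive. apply (is_derive_plus (V := AbsRing_NormedModule C_AbsRing)).
Qed.

Lemma Cdiff_minus f g z df dg :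
  Cdiff f z df -> Cdiff g z dg -> Cdiff (fun x => f x - g x) z (df - dg).
Proof.
  rewrite !Cdiff_is_derive. apply (is_derive_minus (V := AbsRing_NormedModule C_AbsRing)).
Qed.

Lemma Cdiff_mult f g z df dg :
  Cdiff f z df -> Cdiff g z dg -> Cdiff (fun x => f x * g x) z (df * g z + f z * dg).
Proof.
  rewrite !Cdiff_is_derive. intros Hf Hg. exact (is_derive_mult f g z df dg Hf Hg Cmult_comm).
Qed.

Lemma Cdiff_comp f g z df dg :
  Cdiff f (g z) df -> Cdiff g z dg -> Cdiff (fun x => f (g x)) z (dg * df).
Proof.
  rewrite !Cdiff_is_derive. apply (is_derive_comp (V := AbsRing_NormedModule C_AbsRing)).
Qed.

Lemma Cdiff_shift f z z0 l : Cdiff f (z - z0) l -> Cdiff (fun x => f (x - z0)) z l.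
Proof.
  intros Hf. apply (Cdiff_val _ _ (1 * l)); [ring|].
  apply (Cdiff_comp f (fun x => x - z0)); [exact Hf|].
  apply (Cdiff_val _ _ (1 + 0)); [ring|].
  apply (Cdiff_plus (fun x => x) (fun _ => - z0)); [apply Cdiff_id | apply Cdiff_const].
Qed.

Lemma Rmult_lt_of_lt_div x d k : 0 < k -> x < d / k -> x * k < d.
Proof.
  intros Hk H. apply (Rmult_lt_compat_r k) in H; [|exact Hk].
  unfold Rdiv in H. rewrite Rmult_assoc, Rinv_l in H by lra. lra.
Qed.

Lemma Cmod_Rmult (t : R) (b : C) : Cmod (RtoC t * b) = (Rabs t * Cmod b)%R.
Proof. rewrite Cmod_mult, Cmod_R. reflexivity. Qed.

Lemma Cmod_sub_le a b : Cmod (a - b) <= Cmod a + Cmod b.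
Proof. unfold Cminus. eapply Rle_trans; [apply Cmod_triangle|]. rewrite Cmod_opp. lra. Qed.

Lemma Cmod_sub_ge a b : Cmod a - Cmod b <= Cmod (a - b).
Proof. pose proof (Cmod_triangle (a - b) b). replace (a - b + b) with a in H by ring. lra. Qed.

Lemma Cmod_sub_diag z : Cmod (z - z) = 0.
Proof. replace (z - z) with (RtoC 0) by ring. rewrite Cmod_R. apply Rabs_R0. Qed.

Lemma Cmod_sq X : (Cmod X * Cmod X = Re X * Re X + Im X * Im X)%R.
Proof. pose proof (Cmod2_alt X) as H. simpl in H. rewrite !Rmult_1_r in H. exact H. Qed.

Lemma Cdiff_cont f z l : Cdiff f z l -> Ccont f z.
Proof.
  intros H eps He.
  destruct (H 1 Rlt_0_1) as [d [Hd H']].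
  pose proof (Cmod_ge_0 l).
  exists (Rmin d (eps / (Cmod l + 2))). split.
  { apply Rmin_case; [lra | apply Rdiv_lt_0_compat; lra]. }
  intros y Hy.
  specialize (H' y (Rlt_le_trans _ _ _ Hy (Rmin_l _ _))).
  assert (Cmod (y - z) * (Cmod l + 2) < eps).
  { apply Rmult_lt_of_lt_div; [lra|]. exact (Rlt_le_trans _ _ _ Hy (Rmin_r _ _)). }
  replace (f y - f z) with ((f y - f z - (y - z) * l) + (y - z) * l) by ring.
  eapply Rle_lt_trans; [apply Cmod_triangle|]. rewrite Cmod_mult.
  pose proof (Cmod_ge_0 (y - z)). nra.
Qed.

Lemma Cdiff_locally_const_eq0 f z l (c : C) r :
  0 < r -> (forall y, Cmod (y - z) < r -> f y = c) -> Cdiff f z l -> l = 0.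
Proof.
  intros Hr Hc H. destruct (Ceq_dec l 0) as [|Hl]; [assumption|]. exfalso.
  apply Cmod_gt_0 in Hl.
  destruct (H (Cmod l / 2)%R) as [d [Hd H']]; [lra|].
  set (h := (Rmin d r / 2)%R).
  assert (Hh : 0 < h < Rmin d r).
  { assert (0 < Rmin d r) by (apply Rmin_case; lra). unfold h; lra. }
  pose proof (Rmin_l d r). pose proof (Rmin_r d r).
  assert (Hzh : Cmod (z + RtoC h - z) = h).
  { replace (z + RtoC h - z) with (RtoC h) by ring. rewrite Cmod_R. apply Rabs_pos_eq. lra. }
  specialize (H' (z + RtoC h) ltac:(lra)).
  rewrite !Hc, Hzh in H' by (rewrite ?Cmod_sub_diag, ?Hzh; lra).
  replace (c - c - (z + RtoC h - z) * l) with (- (RtoC h * l)) in H' by ring.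
  rewrite Cmod_opp, Cmod_Rmult, Rabs_pos_eq in H' by lra. nra.
Qed.

Lemma Re_conj_mult_sub c A B :
  (Re (Cconj c * A) - Re (Cconj c * B))%R = Re (Cconj c * (A - B)).
Proof. destruct c, A, B. simpl. ring. Qed.

Lemma Re_conj_mult_scal c (h : R) X : (h * Re (Cconj c * X))%R = Re (Cconj c * (RtoC h * X)).
Proof. destruct c, X. simpl. ring. Qed.

Lemma Rabs_Re_conj_mult_le c X : Rabs (Re (Cconj c * X)) <= Cmod c * Cmod X.
Proof. rewrite <- Cmod_conj, <- Cmod_mult. apply re_le_Cmod. Qed.

Lemma Re_conj_mult_self c : Re (Cconj c * c) = (Cmod c * Cmod c)%R.
Proof. rewrite Cmod_sq. destruct c. simpl. ring. Qed.

Lemma seg_sub (a b : C) (s t : R) : (a + RtoC s * b) - (a + RtoC t * b) = RtoC (s - t) * b.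
Proof. rewrite RtoC_minus. ring. Qed.

Definition Rcont (phi : R -> C) (t : R) : Prop :=
  forall eps, 0 < eps -> exists d, 0 < d /\
    forall s, Rabs (s - t) < d -> Cmod (phi s - phi t) < eps.

Lemma Rcont_seg f a b t : Ccont f (a + RtoC t * b) -> Rcont (fun s => f (a + RtoC s * b)) t.
Proof.
  intros H eps He. destruct (H eps He) as [d [Hd H']].
  pose proof (Cmod_ge_0 b).
  exists (d / (Cmod b + 1))%R. split; [apply Rdiv_lt_0_compat; lra|].
  intros s Hs. apply H'. rewrite seg_sub, Cmod_Rmult.
  apply Rmult_lt_of_lt_div in Hs; [|lra].
  pose proof (Rabs_pos (s - t)). nra.
Qed.

Lemma continuity_pt_Re_conj_mult (phi : R -> C) c t :
  Rcont phi t -> continuity_pt (fun s => Re (Cconj c * phi s)) t.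
Proof.
  intros H. apply continuity_pt_filterlim, (filterlim_locally (T := R_UniformSpace)).
  intros [eps He]. simpl.
  pose proof (Cmod_ge_0 c).
  destruct (H (eps / (Cmod c + 1))%R) as [d [Hd H']]; [apply Rdiv_lt_0_compat; lra|].
  exists (mkposreal d Hd). intros s Hs.
  change (Rabs (Re (Cconj c * phi s) - Re (Cconj c * phi t)) < eps).
  rewrite Re_conj_mult_sub. eapply Rle_lt_trans; [apply Rabs_Re_conj_mult_le|].
  specialize (H' s Hs). apply Rmult_lt_of_lt_div in H'; [|lra].
  pose proof (Cmod_ge_0 (phi s - phi t)). nra.
Qed.

Lemma is_derive_Re_seg f a b c t l :
  Cdiff f (a + RtoC t * b) l ->
  is_derive (fun s : R => Re (Cconj c * f (a + RtoC s * b))) t (Re (Cconj c * (b * l))).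
Proof.
  intros H. apply is_derive_Reals. intros eps He.
  pose proof (Cmod_ge_0 c). pose proof (Cmod_ge_0 b).
  set (K := (Cmod c * Cmod b + 1)%R).
  assert (HK : Cmod c * Cmod b < K) by (unfold K; lra).
  assert (0 <= Cmod c * Cmod b) by nra.
  destruct (H (eps / (2 * K))%R) as [d [Hd H']]; [apply Rdiv_lt_0_compat; lra|].
  assert (Hd2 : 0 < d / (Cmod b + 1)) by (apply Rdiv_lt_0_compat; lra).
  exists (mkposreal _ Hd2). intros h Hh0 Hh. simpl pos in Hh.
  apply Rmult_lt_of_lt_div in Hh; [|lra].
  specialize (H' (a + RtoC (t + h) * b)).
  rewrite seg_sub, Cmod_Rmult in H'. replace (t + h - t)%R with h in H' by ring.
  pose proof (Rabs_pos_lt h Hh0).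
  specialize (H' ltac:(nra)).
  set (Y := f (a + RtoC (t + h) * b)) in *. set (Z := f (a + RtoC t * b)) in *.
  replace ((Re (Cconj c * Y) - Re (Cconj c * Z)) / h - Re (Cconj c * (b * l)))%R
    with (Re (Cconj c * (Y - Z - RtoC h * b * l)) / h)%R.
  2:{ rewrite <- Re_conj_mult_sub, <- Cmult_assoc, <- Re_conj_mult_scal, <- Re_conj_mult_sub.
      field. exact Hh0. }
  unfold Rdiv. rewrite Rabs_mult, Rabs_inv.
  apply (Rmult_lt_reg_r (Rabs h)); [assumption|].
  rewrite Rmult_assoc, Rinv_l, Rmult_1_r by lra.
  eapply Rle_lt_trans; [apply Rabs_Re_conj_mult_le|].
  assert (Cmod c * (eps / (2 * K) * (Rabs h * Cmod b)) < eps * Rabs h).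
  { replace (Cmod c * (eps / (2 * K) * (Rabs h * Cmod b)))%R
      with (eps * Rabs h * (Cmod c * Cmod b / (2 * K)))%R by (field; lra).
    assert (Cmod c * Cmod b / (2 * K) < 1).
    { apply (Rmult_lt_reg_r (2 * K)); [lra|].
      unfold Rdiv. rewrite Rmult_assoc, Rinv_l by lra. lra. }
    assert (0 < eps * Rabs h) by (apply Rmult_lt_0_compat; lra).
    nra. }
  eapply Rle_lt_trans; [|eassumption]. apply Rmult_le_compat_l; [lra|].
  exact H'.
Qed.

Lemma Re_mean_value (f f' : C -> C) (a b L c : C) (t0 t1 M : R) :
  t0 < t1 ->
  (forall t, t0 <= t <= t1 -> Ccont f (a + RtoC t * b)) ->
  (forall t, t0 < t < t1 -> Cdiff f (a + RtoC t * b) (f' (a + RtoC t * b))) ->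
  (forall t, t0 < t < t1 -> Cmod (f' (a + RtoC t * b) - L) <= M) ->
  Re (Cconj c * (f (a + RtoC t1 * b) - f (a + RtoC t0 * b) - RtoC (t1 - t0) * (b * L)))
    <= (t1 - t0) * (Cmod c * (Cmod b * M)).
Proof.
  intros Ht Hc Hd Hg.
  assert (HM : 0 <= M).
  { eapply Rle_trans; [apply Cmod_ge_0 | apply (Hg ((t0 + t1) / 2)%R); lra]. }
  set (K := Re (Cconj c * (b * L))).
  set (psi := fun s : R => (Re (Cconj c * f (a + RtoC s * b)%C) - s * K)%R).
  set (dpsi := fun s : R =>
    if Rlt_dec t0 s then if Rlt_dec s t1
      then (Re (Cconj c * (b * f' (a + RtoC s * b)%C)) - K)%R else 0%R else 0%R).
  pose proof (Cmod_ge_0 c). pose proof (Cmod_ge_0 b).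
  destruct (MVT_gen psi t0 t1 dpsi) as [xi [Hxi Heq]];
    rewrite ?Rmin_left, ?Rmax_right by lra.
  - intros s Hs. unfold dpsi.
    destruct (Rlt_dec t0 s); [|lra]. destruct (Rlt_dec s t1); [|lra].
    apply (is_derive_minus (fun s => Re (Cconj c * f (a + RtoC s * b)%C)) (fun s => s * K)%R).
    + apply is_derive_Re_seg, Hd. lra.
    + auto_derive; [exact I | ring].
  - intros s Hs. apply continuity_pt_minus.
    + apply continuity_pt_Re_conj_mult, Rcont_seg, Hc. lra.
    + apply continuity_pt_mult; [apply continuity_pt_id | apply continuity_pt_const].
      intros u v; reflexivity.
  - replace (Re (Cconj c * _)) with (psi t1 - psi t0)%R
      by (unfold psi, K; rewrite <- !Re_conj_mult_sub, <- Re_conj_mult_scal; ring).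
    rewrite Heq, Rmult_comm. apply Rmult_le_compat_l; [lra|].
    unfold dpsi.
    destruct (Rlt_dec t0 xi); [|apply Rmult_le_pos; [|apply Rmult_le_pos]; assumption].
    destruct (Rlt_dec xi t1); [|apply Rmult_le_pos; [|apply Rmult_le_pos]; assumption].
    unfold K. rewrite Re_conj_mult_sub.
    replace (b * f' (a + RtoC xi * b) - b * L) with (b * (f' (a + RtoC xi * b) - L)) by ring.
    eapply Rle_trans; [eapply Rle_trans; [apply Rle_abs | apply Rabs_Re_conj_mult_le]|].
    rewrite Cmod_mult. apply Rmult_le_compat_l; [assumption|].
    apply Rmult_le_compat_l; [assumption|]. apply Hg. lra.
Qed.

Lemma Cmod_mean_value (f f' : C -> C) (a b L : C) (t0 t1 M : R) :
  t0 < t1 ->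
  (forall t, t0 <= t <= t1 -> Ccont f (a + RtoC t * b)) ->
  (forall t, t0 < t < t1 -> Cdiff f (a + RtoC t * b) (f' (a + RtoC t * b))) ->
  (forall t, t0 < t < t1 -> Cmod (f' (a + RtoC t * b) - L) <= M) ->
  Cmod (f (a + RtoC t1 * b) - f (a + RtoC t0 * b) - RtoC (t1 - t0) * (b * L))
    <= (t1 - t0) * (Cmod b * M).
Proof.
  intros Ht Hc Hd Hg.
  set (c := f (a + RtoC t1 * b) - f (a + RtoC t0 * b) - RtoC (t1 - t0) * (b * L)).
  pose proof (Re_mean_value f f' a b L c t0 t1 M Ht Hc Hd Hg) as H.
  fold c in H. rewrite Re_conj_mult_self in H.
  assert (HM : 0 <= M).
  { eapply Rle_trans; [apply Cmod_ge_0 | apply (Hg ((t0 + t1) / 2)%R); lra]. }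
  pose proof (Cmod_ge_0 c). pose proof (Cmod_ge_0 b).
  destruct (Rle_lt_or_eq_dec 0 (Cmod c) ltac:(assumption)) as [Hp|Hz].
  - apply (Rmult_le_reg_l (Cmod c)); [exact Hp | nra].
  - rewrite <- Hz. apply Rmult_le_pos; [lra | apply Rmult_le_pos; lra].
Qed.

Lemma Cmod_mean_value_segment (f f' : C -> C) (p x L : C) (M : R) :
  (forall t, 0 <= t <= 1 -> Ccont f (p + RtoC t * (x - p))) ->
  (forall t, 0 < t < 1 -> Cdiff f (p + RtoC t * (x - p)) (f' (p + RtoC t * (x - p)))) ->
  (forall t, 0 < t < 1 -> Cmod (f' (p + RtoC t * (x - p)) - L) <= M) ->
  Cmod (f x - f p - (x - p) * L) <= Cmod (x - p) * M.
Proof.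
  intros Hc Hd Hg.
  pose proof (Cmod_mean_value f f' p (x - p) L 0 1 M Rlt_0_1 Hc Hd Hg) as H.
  replace (p + RtoC 1 * (x - p)) with x in H by ring.
  replace (p + RtoC 0 * (x - p)) with p in H by ring.
  replace (RtoC (1 - 0)) with (RtoC 1) in H by (f_equal; ring).
  replace (f x - f p - RtoC 1 * ((x - p) * L)) with (f x - f p - (x - p) * L) in H by ring.
  lra.
Qed.

Lemma last_zero (phi : R -> C) :
  (forall t, 0 <= t <= 1 -> Rcont phi t) -> phi 0%R = 0 ->
  exists t0, 0 <= t0 <= 1 /\ phi t0 = 0 /\ forall t, t0 < t <= 1 -> phi t <> 0.
Proof.
  intros Hc H0.
  set (E := fun t => 0 <= t <= 1 /\ phi t = 0).
  destruct (completeness E) as [t0 [Hub Hlub]].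
  { exists 1%R. intros x [Hx _]. lra. }
  { exists 0%R. split; [lra | exact H0]. }
  assert (Ht0 : 0 <= t0 <= 1).
  { split; [apply Hub; split; [lra | exact H0] | apply Hlub; intros x [Hx _]; lra]. }
  exists t0. split; [exact Ht0|]. split.
  - destruct (Ceq_dec (phi t0) 0) as [|Hn]; [assumption|]. exfalso.
    apply Cmod_gt_0 in Hn.
    destruct (Hc t0 Ht0 _ Hn) as [d [Hd H']].
    assert (t0 <= t0 - d / 2); [|lra].
    apply Hlub. intros x [Hx Hphi].
    destruct (Rle_or_lt x (t0 - d / 2)) as [|Hlt]; [assumption|]. exfalso.
    assert (x <= t0) by (apply Hub; split; assumption).
    specialize (H' x). rewrite Rabs_left1 in H' by lra. specialize (H' ltac:(lra)).
    rewrite Hphi in H'. replace (0 - phi t0) with (- phi t0) in H' by ring.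
    rewrite Cmod_opp in H'. lra.
  - intros t Ht Hz. assert (t <= t0) by (apply Hub; split; [lra | exact Hz]). lra.
Qed.

Lemma is_derive_pos_increasing_right (h : R -> R) x d : is_derive h x d -> 0 < d ->
  exists e, 0 < e /\ forall s, 0 < s < e -> h x < h (x + s)%R.
Proof.
  intros H Hd. apply is_derive_Reals in H. destruct (H d Hd) as [e He].
  exists e. split; [apply cond_pos|]. intros s Hs.
  specialize (He s ltac:(lra)). rewrite Rabs_pos_eq in He by lra.
  apply Rabs_lt_between in He; [|exact (proj2 Hs)].
  assert (0 < (h (x + s)%R - h x) / s) by lra.
  assert (0 < h (x + s)%R - h x); [|lra].
  replace (h (x + s)%R - h x)%R with ((h (x + s)%R - h x) / s * s)%R by (field; lra). nra.
Qed.

Lemma is_derive_neg_increasing_left (h : R -> R) x d : is_derive h x d -> d < 0 ->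
  exists e, 0 < e /\ forall s, 0 < s < e -> h x < h (x - s)%R.
Proof.
  intros H Hd. apply is_derive_Reals in H. destruct (H (- d)%R ltac:(lra)) as [e He].
  exists e. split; [apply cond_pos|]. intros s Hs.
  specialize (He (- s)%R ltac:(lra)). rewrite Rabs_Ropp, Rabs_pos_eq in He by lra.
  apply Rabs_lt_between in He; [|exact (proj2 Hs)].
  assert ((h (x + - s)%R - h x) / - s < 0) by lra.
  assert (0 < h (x + - s)%R - h x); [|replace (x - s)%R with (x + - s)%R by ring; lra].
  replace (h (x + - s)%R - h x)%R with ((h (x + - s)%R - h x) / - s * - s)%R by (field; lra). nra.
Qed.

(* Darboux: a derivative that avoids ]-c, c[ on [0, 1] cannot change sign there. *)
Lemma derive_sign_persistent (h h' : R -> R) (c : R) : 0 < c ->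
  (forall t, 0 <= t <= 1 -> is_derive h t (h' t)) ->
  (forall t, 0 <= t <= 1 -> c <= h' t \/ h' t <= - c) ->
  c <= h' 0 -> c <= h' 1.
Proof.
  intros Hc Hd Hs H0.
  destruct (Hs 1%R ltac:(lra)) as [ok|bad]; [exact ok|]. exfalso.
  destruct (continuity_ab_maj h 0 1) as [m [Hm Hmr]]; [lra| |].
  { intros t Ht. apply derivable_continuous_pt. exists (h' t).
    apply is_derive_Reals, Hd, Ht. }
  destruct (Hs m Hmr) as [Hp|Hn].
  - destruct (Req_dec m 1) as [->|Hm1]; [lra|].
    destruct (is_derive_pos_increasing_right h m (h' m) (Hd m Hmr) ltac:(lra)) as [e [He Hi]].
    set (s := Rmin (e / 2) ((1 - m) / 2)).
    assert (0 < s) by (unfold s; apply Rmin_case; lra).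
    assert (s <= e / 2) by apply Rmin_l. assert (s <= (1 - m) / 2) by apply Rmin_r.
    specialize (Hi s ltac:(lra)). specialize (Hm (m + s)%R ltac:(lra)). lra.
  - destruct (Req_dec m 0) as [->|Hm0]; [lra|].
    destruct (is_derive_neg_increasing_left h m (h' m) (Hd m Hmr) ltac:(lra)) as [e [He Hi]].
    set (s := Rmin (e / 2) (m / 2)).
    assert (0 < s) by (unfold s; apply Rmin_case; lra).
    assert (s <= e / 2) by apply Rmin_l. assert (s <= m / 2) by apply Rmin_r.
    specialize (Hi s ltac:(lra)). specialize (Hm (m - s)%R ltac:(lra)). lra.
Qed.

Definition Cinterior (Q : C -> Prop) (y : C) : Prop :=
  exists rho, 0 < rho /\ forall x, Cmod (x - y) < rho -> Q x.

Lemma Copen_Cinterior_iff (U : C -> Prop) : Copen U <-> forall y, U y -> Cinterior U y.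
Proof.
  split.
  - intros Ho y Hy. destruct (Ho y Hy) as [eps Heps]. exists eps. split; [apply cond_pos|].
    intros x Hx. apply Heps, C_NormedModule_mixin_compat1, Hx.
  - intros H y Hy. destruct (H y Hy) as [rho [Hrho Hb]].
    assert (Hs : sqrt 2 < 2).
    { pose proof (sqrt_sqrt 2 ltac:(lra)). pose proof (sqrt_pos 2). nra. }
    assert (Hp : 0 < rho / 2) by lra.
    exists (mkposreal _ Hp). intros x Hx.
    apply C_NormedModule_mixin_compat2 in Hx. simpl in Hx. apply Hb.
    change (minus x y) with (x - y) in Hx. pose proof (sqrt_pos 2). nra.
Qed.

Lemma Copen_Cinterior (Q : C -> Prop) : Copen (Cinterior Q).
Proof.
  apply Copen_Cinterior_iff. intros y [rho [Hrho Hy]]. exists (rho / 2)%R. split; [lra|].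
  intros x Hx. exists (rho / 2)%R. split; [lra|]. intros x' Hx'. apply Hy.
  replace (x' - y) with ((x' - x) + (x - y)) by ring.
  eapply Rle_lt_trans; [apply Cmod_triangle | lra].
Qed.

Lemma Ccont_limit_point f w c : Ccont f w ->
  (forall rho, 0 < rho -> exists y, Cmod (y - w) < rho /\ f y = c) -> f w = c.
Proof.
  intros Hf Hacc. destruct (Ceq_dec (f w - c) 0) as [H0|Hn].
  - replace (f w) with (f w - c + c) by ring. rewrite H0. ring.
  - exfalso. apply Cmod_gt_0 in Hn. destruct (Hf _ Hn) as [d [Hd H']].
    destruct (Hacc d Hd) as [y [Hy Hfy]]. specialize (H' y Hy). rewrite Hfy in H'.
    replace (c - f w) with (- (f w - c)) in H' by ring. rewrite Cmod_opp in H'. lra.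
Qed.

Lemma Cmod_add_ge_of_near p X : Cmod (X - p) < Cmod p / 2 -> 3 * Cmod p / 2 <= Cmod (X + p).
Proof.
  intros H. pose proof (Cmod_sub_ge (RtoC 2 * p) (- (X - p))) as Htri.
  replace (RtoC 2 * p - - (X - p)) with (X + p) in Htri by ring.
  rewrite Cmod_opp, Cmod_Rmult, Rabs_pos_eq in Htri by lra. lra.
Qed.

Lemma Cdiff_sqrt_branch (S Q : C -> C) w0 q r :
  0 < r -> S w0 <> 0 -> Cdiff Q w0 q ->
  (forall y, Cmod (y - w0) < r -> S y * S y = Q y /\ Cmod (S y - S w0) < Cmod (S w0) / 2) ->
  Cdiff S w0 (q / (2 * S w0)).
Proof.
  intros Hr Hp HQ Hnear eps Heps.
  set (p := S w0) in *. apply Cmod_gt_0 in Hp as Hpp.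
  set (k := Cmod (q / (2 * p))). assert (Hk : 0 <= k) by apply Cmod_ge_0.
  destruct (HQ (eps * Cmod p / 2)%R) as [d1 [Hd1 H1]]; [nra|].
  destruct (Cdiff_cont Q w0 q HQ (eps * Cmod p * Cmod p / (2 * (k + 1)))%R) as [d2 [Hd2 H2]].
  { apply Rdiv_lt_0_compat; [apply Rmult_lt_0_compat; [nra|] |]; lra. }
  exists (Rmin r (Rmin d1 d2)). split; [apply Rmin_case; [lra | apply Rmin_case; lra]|].
  intros y Hy.
  pose proof (Rmin_l r (Rmin d1 d2)). pose proof (Rmin_r r (Rmin d1 d2)).
  pose proof (Rmin_l d1 d2). pose proof (Rmin_r d1 d2).
  destruct (Hnear y ltac:(lra)) as [Hsq Hclose]. fold p in Hsq, Hclose.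
  specialize (H1 y ltac:(lra)). specialize (H2 y ltac:(lra)).
  assert (Hw0 : S w0 * S w0 = Q w0) by (apply (Hnear w0); rewrite Cmod_sub_diag; lra).
  fold p in Hw0.
  pose proof (Cmod_add_ge_of_near p (S y) Hclose) as Hplus.
  (* [S y - p] is small because [(S y - p) (S y + p) = Q y - Q w0]. *)
  assert (Hsmall : Cmod (S y - p) * (k + 1) <= eps * Cmod p / 2).
  { replace (Q y - Q w0) with ((S y - p) * (S y + p)) in H2 by (rewrite <- Hsq, <- Hw0; ring).
    rewrite Cmod_mult in H2. pose proof (Cmod_ge_0 (S y - p)).
    apply Rmult_lt_of_lt_div in H2; [|lra].
    assert (Cmod (S y - p) * (3 * Cmod p / 2) * (k + 1)
            <= Cmod (S y - p) * Cmod (S y + p) * (k + 1)).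
    { apply Rmult_le_compat_r; [lra|]. apply Rmult_le_compat_l; lra. }
    nra. }
  set (h := y - w0) in *. pose proof (Cmod_ge_0 h).
  assert (Hid : (S y + p) * (S y - p - h * (q / (2 * p)))
                = (Q y - Q w0 - h * q) - h * (q / (2 * p)) * (S y - p)).
  { rewrite <- Hsq, <- Hw0. field. assumption. }
  assert (Hbd : Cmod (S y + p) * Cmod (S y - p - h * (q / (2 * p))) <= eps * Cmod p * Cmod h).
  { rewrite <- Cmod_mult, Hid. eapply Rle_trans; [apply Cmod_sub_le|].
    rewrite !Cmod_mult. fold k.
    assert (k * Cmod (S y - p) <= eps * Cmod p / 2) by (pose proof (Cmod_ge_0 (S y - p)); nra).
    assert (Cmod h * (k * Cmod (S y - p)) <= Cmod h * (eps * Cmod p / 2))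
      by (apply Rmult_le_compat_l; assumption).
    nra. }
  pose proof (Cmod_ge_0 (S y - p - h * (q / (2 * p)))). nra.
Qed.

Lemma Re_conj_mult_near p X :
  Cmod (X - p) < Cmod p / 2 -> Cmod p * Cmod p / 2 < Re (Cconj p * X).
Proof.
  intros H.
  replace (Re (Cconj p * X)) with (Re (Cconj p * p) + Re (Cconj p * (X - p)))%R
    by (destruct p, X; simpl; ring).
  rewrite Re_conj_mult_self.
  pose proof (Rabs_Re_conj_mult_le p (X - p)) as Hb. apply Rabs_le_between in Hb.
  pose proof (Cmod_ge_0 p). pose proof (Cmod_ge_0 (X - p)). nra.
Qed.

Lemma Re_conj_mult_near_opp p X :
  Cmod (X + p) < Cmod p / 2 -> Re (Cconj p * X) < - (Cmod p * Cmod p / 2).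
Proof.
  intros H. rewrite <- Cmod_opp in H. replace (- (X + p)) with (- X - p) in H by ring.
  apply Re_conj_mult_near in H.
  replace (Re (Cconj p * - X)) with (- Re (Cconj p * X))%R in H by (destruct p, X; simpl; ring).
  lra.
Qed.

Lemma Re_conj_mult_factor p b X :
  Re (Cconj (p * b) * (b * X)) = (Cmod b * Cmod b * Re (Cconj p * X))%R.
Proof. rewrite Cmod_sq. destruct p, b, X. simpl. ring. Qed.

Lemma Cmod_sub_sq_non_acute (a1 a2 : R) A B :
  0 <= a1 -> 0 <= a2 -> Re (Cconj A * B) <= 0 ->
  (a1 * Cmod A) * (a1 * Cmod A) + (a2 * Cmod B) * (a2 * Cmod B)
    <= Cmod (RtoC a1 * A - RtoC a2 * B) * Cmod (RtoC a1 * A - RtoC a2 * B).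
Proof.
  intros H1 H2 HAB.
  assert (Hexp : (Cmod (RtoC a1 * A - RtoC a2 * B) * Cmod (RtoC a1 * A - RtoC a2 * B)
    = (a1 * Cmod A) * (a1 * Cmod A) + (a2 * Cmod B) * (a2 * Cmod B)
      - 2 * (a1 * a2) * Re (Cconj A * B))%R).
  { replace ((a1 * Cmod A) * (a1 * Cmod A))%R with (a1 * a1 * (Cmod A * Cmod A))%R by ring.
    replace ((a2 * Cmod B) * (a2 * Cmod B))%R with (a2 * a2 * (Cmod B * Cmod B))%R by ring.
    rewrite !Cmod_sq. destruct A, B. simpl. ring. }
  rewrite Hexp. assert (0 <= a1 * a2) by nra. nra.
Qed.

Lemma ball_convex z p x r t : Cmod (p - z) < r -> Cmod (x - z) < r -> 0 <= t <= 1 ->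
  Cmod (p + RtoC t * (x - p) - z) < r.
Proof.
  intros Hp Hx Ht.
  replace (p + RtoC t * (x - p) - z) with (RtoC (1 - t) * (p - z) + RtoC t * (x - z))
    by (rewrite RtoC_minus; ring).
  eapply Rle_lt_trans; [apply Cmod_triangle|]. rewrite !Cmod_Rmult.
  rewrite (Rabs_pos_eq t), (Rabs_pos_eq (1 - t)) by lra.
  destruct (Req_dec t 0) as [->|Ht0]; nra.
Qed.

Lemma half_pow_zero a : 0 <= a -> (forall n, a <= (1/2) ^ n) -> a = 0%R.
Proof.
  intros Ha H. destruct (Req_dec a 0) as [|Hne]; [assumption|]. exfalso.
  destruct (pow_lt_1_zero (1/2) ltac:(rewrite Rabs_pos_eq; lra) a ltac:(lra)) as [N HN].
  specialize (HN N (le_n N)). specialize (H N).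
  rewrite Rabs_pos_eq in HN by (apply pow_le; lra). lra.
Qed.

(* Gronwall-type iteration of the mean value inequality: [|f - f z| <= (1/2)^n] on the ball. *)
Lemma eq_of_deriv_le_dist (f f' : C -> C) z R0 : 0 < R0 ->
  (forall y, Cmod (y - z) < R0 ->
     Cdiff f y (f' y) /\ Cmod (f y - f z) <= 1 /\ 4 * R0 * Cmod (f' y) <= Cmod (f y - f z)) ->
  forall y, Cmod (y - z) < R0 -> f y = f z.
Proof.
  intros HR0 Hb.
  assert (Hseg : forall y t, Cmod (y - z) < R0 -> 0 <= t <= 1 -> Cmod (z + RtoC t * (y - z) - z) < R0).
  { intros y t Hy Ht. apply ball_convex; [rewrite Cmod_sub_diag; lra | exact Hy | exact Ht]. }
  assert (Hind : forall n y, Cmod (y - z) < R0 -> Cmod (f y - f z) <= (1/2) ^ n).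
  { induction n as [|n IHn]; intros y Hy; [simpl; apply Hb, Hy|].
    assert (Hm : Cmod (f y - f z - (y - z) * 0) <= Cmod (y - z) * ((1/2) ^ n / (4 * R0))).
    { apply (Cmod_mean_value_segment f f'); intros t Ht;
        destruct (Hb _ (Hseg y t Hy ltac:(lra))) as [Hd [_ Hle]].
      - eapply Cdiff_cont, Hd.
      - exact Hd.
      - pose proof (IHn _ (Hseg y t Hy ltac:(lra))).
        replace (f' (z + RtoC t * (y - z)) - 0) with (f' (z + RtoC t * (y - z))) by ring.
        apply (Rmult_le_reg_l (4 * R0)); [lra|].
        replace (4 * R0 * ((1 / 2) ^ n / (4 * R0)))%R with ((1/2) ^ n)%R by (field; lra). lra. }
    replace (f y - f z - (y - z) * 0) with (f y - f z) in Hm by ring.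
    pose proof (pow_le (1/2) n ltac:(lra)). pose proof (Cmod_ge_0 (y - z)).
    assert (Cmod (y - z) * ((1/2) ^ n / (4 * R0)) <= R0 * ((1/2) ^ n / (4 * R0))).
    { apply Rmult_le_compat_r; [apply Rdiv_le_0_compat; lra | lra]. }
    replace (R0 * ((1/2) ^ n / (4 * R0)))%R with (1/4 * (1/2) ^ n)%R in H1 by (field; lra).
    simpl. lra. }
  intros y Hy.
  assert (H0 : Cmod (f y - f z) = 0%R).
  { apply half_pow_zero; [apply Cmod_ge_0 | intros n; apply Hind, Hy]. }
  apply Cmod_eq_0 in H0. replace (f y) with (f y - f z + f z) by ring. rewrite H0. ring.
Qed.

Ltac Cdiff_poly :=
  eapply Cdiff_val; cycle 1;
  [ repeat first [ apply Cdiff_minus | apply Cdiff_plus | apply Cdiff_mult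
                 | apply Cdiff_id | apply Cdiff_const ]
  | cbv beta; ring ].

Section WeierstrassEquation.

Variables (g2 g3 : C) (D : C -> Prop) (P V : C -> C).

Definition F x := 4 * (x * x * x) - g2 * x - g3.
Definition F' x := 12 * (x * x) - g2.
Definition G x := 6 * (x * x) - g2 / 2.

Lemma Cdiff_F x : Cdiff F x (F' x).
Proof. unfold F, F'. Cdiff_poly. Qed.

Lemma Cdiff_G x : Cdiff G x (12 * x).
Proof. unfold G. Cdiff_poly. Qed.

Hypothesis D_open : forall w, D w -> Cinterior D w.
Hypothesis P_diff : forall w, D w -> Cdiff P w (V w).
Hypothesis V_sq : forall w, D w -> V w * V w = F (P w).

Lemma P_cont w : D w -> Ccont P w.
Proof. intros Hw. eapply Cdiff_cont, P_diff, Hw. Qed.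

Lemma Cdiff_FP w : D w -> Cdiff (fun y => F (P y)) w (V w * F' (P w)).
Proof. intros Hw. apply (Cdiff_comp F P); [apply Cdiff_F | apply P_diff, Hw]. Qed.

Lemma Cdiff_GP w : D w -> Cdiff (fun y => G (P y)) w (V w * (12 * P w)).
Proof. intros Hw. apply (Cdiff_comp G P); [apply Cdiff_G | apply P_diff, Hw]. Qed.

Lemma V_near_pm w0 : D w0 -> V w0 <> 0 ->
  exists rho, 0 < rho /\ forall y, Cmod (y - w0) < rho -> D y /\
    (Cmod (V y - V w0) < Cmod (V w0) / 2 \/ Cmod (V y + V w0) < Cmod (V w0) / 2).
Proof.
  intros Hw0 Hp. set (p := V w0) in *. apply Cmod_gt_0 in Hp.
  destruct (D_open w0 Hw0) as [r0 [Hr0 Hball]].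
  destruct (Cdiff_cont _ _ _ (Cdiff_FP w0 Hw0) (Cmod p * Cmod p / 4)%R) as [d [Hd Hc]]; [nra|].
  exists (Rmin r0 d). split; [apply Rmin_case; lra|]. intros y Hy.
  pose proof (Rmin_l r0 d). pose proof (Rmin_r r0 d).
  assert (HDy : D y) by (apply Hball; lra). split; [exact HDy|].
  specialize (Hc y ltac:(lra)).
  replace (F (P y) - F (P w0)) with ((V y - p) * (V y + p)) in Hc
    by (rewrite <- !V_sq by assumption; unfold p; ring).
  rewrite Cmod_mult in Hc.
  destruct (Rlt_or_le (Cmod (V y - p)) (Cmod p / 2)); [left; assumption|].
  destruct (Rlt_or_le (Cmod (V y + p)) (Cmod p / 2)); [right; assumption|].
  nra.
Qed.

(* The real derivative of [t |-> Re (Cconj (p b) * P (w0 + t b))] is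
   [|b|^2 Re (Cconj p * V (w0 + t b))], which stays away from [0]; by Darboux it keeps the
   sign it has at [t = 0], so [V] stays near [+p] rather than near [-p]. *)
Lemma V_near w0 : D w0 -> V w0 <> 0 ->
  exists rho, 0 < rho /\ forall y, Cmod (y - w0) < rho -> D y /\
    Cmod (V y - V w0) < Cmod (V w0) / 2.
Proof.
  intros Hw0 Hp0. destruct (V_near_pm w0 Hw0 Hp0) as [rho [Hrho Hpm]].
  set (p := V w0) in *. apply Cmod_gt_0 in Hp0 as Hp.
  assert (Hsign : forall y, Cmod (y - w0) < rho ->
            Cmod p * Cmod p / 2 < Re (Cconj p * V y) \/ Re (Cconj p * V y) < - (Cmod p * Cmod p / 2)).
  { intros y Hy. destruct (Hpm y Hy) as [_ [Hnear|Hnear]]; [left | right].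
    - apply Re_conj_mult_near, Hnear.
    - apply Re_conj_mult_near_opp, Hnear. }
  exists rho. split; [exact Hrho|]. intros w Hw. split; [apply Hpm, Hw|].
  destruct (Ceq_dec w w0) as [->|Hne].
  { replace (V w0 - p) with (RtoC 0) by (unfold p; ring). rewrite Cmod_R, Rabs_R0. lra. }
  set (b := w - w0) in *.
  assert (Hb : 0 < Cmod b).
  { apply Cmod_gt_0. intro Hb0. apply Hne. replace w with (w - w0 + w0) by ring. fold b. rewrite Hb0. ring. }
  assert (Hin : forall t, 0 <= t <= 1 -> Cmod (w0 + RtoC t * b - w0) < rho).
  { intros t Ht. apply ball_convex; [rewrite Cmod_sub_diag; lra | exact Hw | exact Ht]. }
  set (h' := fun t : R => Re (Cconj (p * b) * (b * V (w0 + RtoC t * b)))).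
  assert (Hc : 0 < Cmod b * Cmod b * (Cmod p * Cmod p / 2)) by (apply Rmult_lt_0_compat; nra).
  assert (Hend : Cmod b * Cmod b * (Cmod p * Cmod p / 2) <= h' 1%R).
  { apply (derive_sign_persistent (fun t => Re (Cconj (p * b) * P (w0 + RtoC t * b)))); [exact Hc | | |].
    - intros t Ht. apply is_derive_Re_seg, P_diff, Hpm, Hin, Ht.
    - intros t Ht. unfold h'. rewrite Re_conj_mult_factor.
      destruct (Hsign _ (Hin t Ht)); [left | right]; nra.
    - unfold h'. rewrite Re_conj_mult_factor.
      replace (w0 + RtoC 0 * b) with w0 by ring. fold p. rewrite Re_conj_mult_self. nra. }
  unfold h' in Hend. rewrite Re_conj_mult_factor in Hend.
  replace (w0 + RtoC 1 * b) with w in Hend by (unfold b; ring).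
  destruct (Hpm w Hw) as [_ [Hnear|Hnear]]; [exact Hnear|].
  apply Re_conj_mult_near_opp in Hnear. exfalso.
  assert (0 < Cmod b * Cmod b) by nra. nra.
Qed.

Lemma Cdiff_V_nonzero w0 : D w0 -> V w0 <> 0 -> Cdiff V w0 (G (P w0)).
Proof.
  intros Hw0 Hp. destruct (V_near w0 Hw0 Hp) as [rho [Hrho Hnear]].
  apply (Cdiff_val _ _ (V w0 * F' (P w0) / (2 * V w0))).
  { unfold F', G. field. exact Hp. }
  apply (Cdiff_sqrt_branch V (fun y => F (P y)) w0 _ rho Hrho Hp (Cdiff_FP w0 Hw0)).
  intros y Hy. destruct (Hnear y Hy) as [HDy Hc]. split; [apply V_sq, HDy | exact Hc].
Qed.

Lemma V_cont w : D w -> Ccont V w.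
Proof.
  intros Hw. destruct (Ceq_dec (V w) 0) as [H0|Hn].
  2:{ eapply Cdiff_cont, Cdiff_V_nonzero; assumption. }
  intros eps Heps.
  destruct (D_open w Hw) as [r0 [Hr0 Hball]].
  destruct (Cdiff_cont _ _ _ (Cdiff_FP w Hw) (eps * eps)%R) as [d [Hd Hq]]; [nra|].
  exists (Rmin r0 d). split; [apply Rmin_case; lra|]. intros y Hy.
  pose proof (Rmin_l r0 d). pose proof (Rmin_r r0 d).
  specialize (Hq y ltac:(lra)).
  rewrite <- (V_sq w Hw), <- (V_sq y ltac:(apply Hball; lra)) in Hq.
  rewrite H0 in Hq |- *. replace (V y * V y - 0 * 0) with (V y * V y) in Hq by ring.
  replace (V y - 0) with (V y) by ring. rewrite Cmod_mult in Hq.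
  pose proof (Cmod_ge_0 (V y)). nra.
Qed.

Lemma V_sq_double_root z : D z -> V z = 0 -> F' (P z) = 0 ->
  forall y, D y -> V y * V y = 4 * ((P y - P z) * (P y - P z)) * (P y + 2 * P z).
Proof.
  intros Hz Hv Hf y Hy. set (e := P z) in *.
  assert (Hg2 : g2 = 12 * (e * e)).
  { unfold F' in Hf. replace g2 with (12 * (e * e) - (12 * (e * e) - g2)) by ring. rewrite Hf. ring. }
  assert (Hg3 : g3 = -8 * (e * e * e)).
  { pose proof (V_sq z Hz) as H. rewrite Hv in H. unfold F in H. fold e in H. rewrite Hg2 in H.
    replace g3 with (0 * 0 + g3) by ring. rewrite H. ring. }
  rewrite (V_sq y Hy). unfold F. rewrite Hg2, Hg3. ring.
Qed.

Lemma V_small_double_root z : D z -> V z = 0 -> F' (P z) = 0 ->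
  exists R0, 0 < R0 /\ forall y, Cmod (y - z) < R0 ->
    D y /\ Cmod (P y - P z) <= 1 /\ 4 * R0 * Cmod (V y) <= Cmod (P y - P z).
Proof.
  intros Hz Hv Hf. set (e := P z).
  destruct (D_open z Hz) as [r1 [Hr1 Hb1]].
  destruct (P_cont z Hz 1%R Rlt_0_1) as [d1 [Hd1 Hc1]].
  pose proof (Cmod_ge_0 e).
  set (K := (4 * (3 * Cmod e + 1))%R).
  set (R0 := Rmin (Rmin r1 d1) (1 / (4 * (K + 1)))).
  assert (HR : 0 < R0 <= Rmin r1 d1).
  { split; [|apply Rmin_l].
    unfold R0. apply Rmin_case; [apply Rmin_case | apply Rdiv_lt_0_compat]; unfold K; lra. }
  assert (HRK : 16 * (R0 * R0) * K <= 1).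
  { assert (R0 <= 1 / (4 * (K + 1))) by apply Rmin_r.
    apply (Rmult_le_compat_r (4 * (K + 1))) in H0; [|unfold K; lra].
    unfold Rdiv in H0. rewrite Rmult_1_l, Rinv_l in H0 by (unfold K; lra). unfold K in *. nra. }
  exists R0. split; [lra|]. intros y Hy.
  pose proof (Rmin_l r1 d1). pose proof (Rmin_r r1 d1).
  assert (HDy : D y) by (apply Hb1; lra). split; [exact HDy|].
  assert (Hclose : Cmod (P y - e) < 1) by (apply Hc1; lra). split; [lra|].
  assert (Hsum : Cmod (P y + 2 * e) <= 3 * Cmod e + 1).
  { replace (P y + 2 * e) with ((P y - e) + 3 * e) by ring.
    eapply Rle_trans; [apply Cmod_triangle|].
    rewrite Cmod_mult, Cmod_R, Rabs_pos_eq by lra. lra. }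
  assert (HV : Cmod (V y) * Cmod (V y) <= K * (Cmod (P y - e) * Cmod (P y - e))).
  { rewrite <- Cmod_mult, (V_sq_double_root z Hz Hv Hf y HDy), !Cmod_mult.
    rewrite Cmod_R, Rabs_pos_eq by lra. fold e. unfold K.
    pose proof (Cmod_ge_0 (P y - e)). pose proof (Cmod_ge_0 (P y + 2 * e)).
    assert (0 <= Cmod (P y - e) * Cmod (P y - e)) by nra. nra. }
  pose proof (Cmod_ge_0 (V y)). pose proof (Cmod_ge_0 (P y - e)).
  assert (16 * (R0 * R0) * (Cmod (V y) * Cmod (V y))
          <= 16 * (R0 * R0) * (K * (Cmod (P y - e) * Cmod (P y - e)))).
  { apply Rmult_le_compat_l; [nra | exact HV]. }
  assert (0 <= Cmod (P y - e) * Cmod (P y - e)) by nra. nra.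
Qed.

Lemma P_locally_const_at_double_root z : D z -> V z = 0 -> F' (P z) = 0 ->
  Cinterior (fun y => D y /\ P y = P z) z.
Proof.
  intros Hz Hv Hf. destruct (V_small_double_root z Hz Hv Hf) as [R0 [HR0 Hb]].
  exists R0. split; [exact HR0|]. intros y Hy. split; [apply (Hb y Hy)|].
  apply (eq_of_deriv_le_dist P V z R0 HR0); [|exact Hy].
  intros u Hu. destruct (Hb u Hu) as [HDu Hu']. split; [apply P_diff, HDu | exact Hu'].
Qed.

Definition simple_root_ball (z : C) (r : R) (k : C) := 0 < r /\ k <> 0 /\
  (forall y, Cmod (y - z) < r -> D y) /\
  (forall y, Cmod (y - z) < r -> Cmod (G (P y) - k / 2) <= Cmod k / 8).

Lemma simple_root_ball_exists z : D z -> F' (P z) <> 0 -> exists r, simple_root_ball z r (F' (P z)).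
Proof.
  intros Hz Hk. destruct (D_open z Hz) as [r0 [Hr0 Hball]].
  assert (Hkp : 0 < Cmod (F' (P z))) by (apply Cmod_gt_0, Hk).
  destruct (Cdiff_cont _ _ _ (Cdiff_GP z Hz) (Cmod (F' (P z)) / 8)%R) as [d [Hd Hg]]; [lra|].
  exists (Rmin r0 d). split; [apply Rmin_case; lra|]. split; [exact Hk|].
  split; intros y Hy; pose proof (Rmin_l r0 d); pose proof (Rmin_r r0 d).
  - apply Hball. lra.
  - replace (F' (P z) / 2) with (G (P z)) by (unfold G, F'; field).
    left. apply Hg. lra.
Qed.

(* Between its last zero [p + (1 - lam) (x - p)] on [[p, x]] and [x], [V] is differentiable
   with derivative close to [k / 2]. *)
Lemma V_linear_growth z r k p x : simple_root_ball z r k ->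
  Cmod (p - z) < r -> Cmod (x - z) < r -> V p = 0 -> V x <> 0 ->
  exists lam, 0 < lam <= 1 /\
    Cmod (V x - RtoC lam * ((x - p) * (k / 2))) <= lam * (Cmod (x - p) * (Cmod k / 8)).
Proof.
  intros [Hr [Hk [HDb Hb]]] Hp Hx Hvp Hvx.
  set (b := x - p).
  assert (Hseg : forall t, 0 <= t <= 1 -> Cmod (p + RtoC t * b - z) < r).
  { intros t Ht. apply ball_convex; assumption. }
  destruct (last_zero (fun t => V (p + RtoC t * b))) as [t0 [Ht0 [Hz0 Hnz]]].
  { intros t Ht. apply Rcont_seg, V_cont, HDb, Hseg, Ht. }
  { replace (p + RtoC 0 * b) with p by ring. exact Hvp. }
  assert (Ht01 : t0 < 1).
  { destruct (Req_dec t0 1) as [->|Hne]; [|lra]. exfalso. apply Hvx.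
    replace x with (p + RtoC 1 * b) by (unfold b; ring). exact Hz0. }
  assert (Hm : Cmod (V (p + RtoC 1 * b) - V (p + RtoC t0 * b) - RtoC (1 - t0) * (b * (k / 2)))
               <= (1 - t0) * (Cmod b * (Cmod k / 8))).
  { apply (Cmod_mean_value V (fun w => G (P w))); [exact Ht01 | | |]; intros t Ht.
    - apply V_cont, HDb, Hseg. lra.
    - apply Cdiff_V_nonzero; [apply HDb, Hseg; lra | apply Hnz; lra].
    - apply Hb, Hseg. lra. }
  rewrite Hz0 in Hm. replace (p + RtoC 1 * b) with x in Hm by (unfold b; ring).
  exists (1 - t0)%R. split; [lra|].
  replace (V x - RtoC (1 - t0) * (b * (k / 2))) with (V x - 0 - RtoC (1 - t0) * (b * (k / 2)))
    by ring.
  exact Hm.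
Qed.

(* Otherwise [V x] would be close both to a positive multiple of [(x - p1) k / 2] and to one
   of [(x - p2) k / 2], which a non-acute angle at [x] keeps apart. *)
Lemma V_zero_of_non_acute z r k p1 p2 x : simple_root_ball z r k ->
  Cmod (p1 - z) < r -> Cmod (p2 - z) < r -> Cmod (x - z) < r ->
  V p1 = 0 -> V p2 = 0 -> Re (Cconj (x - p1) * (x - p2)) <= 0 -> V x = 0.
Proof.
  intros Hg H1 H2 Hx Hv1 Hv2 Hre.
  destruct (Ceq_dec (V x) 0) as [|Hn]; [assumption|]. exfalso.
  destruct (V_linear_growth z r k p1 x Hg H1 Hx Hv1 Hn) as [a1 [Ha1 G1]].
  destruct (V_linear_growth z r k p2 x Hg H2 Hx Hv2 Hn) as [a2 [Ha2 G2]].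
  destruct Hg as [_ [Hk _]]. apply Cmod_gt_0 in Hk.
  set (A := x - p1) in *. set (B := x - p2) in *.
  assert (HA : 0 < Cmod A).
  { apply Cmod_gt_0. intro HA0. apply Hn. replace x with p1; [exact Hv1|].
    replace x with (x - p1 + p1) by ring. fold A. rewrite HA0. ring. }
  pose proof (Cmod_ge_0 B).
  set (W := Cmod (RtoC a1 * A - RtoC a2 * B)).
  assert (HW : W * (Cmod k / 2) <= (a1 * Cmod A + a2 * Cmod B) * (Cmod k / 8)).
  { assert (Hk2 : Cmod (k / 2) = (Cmod k / 2)%R).
    { rewrite Cmod_div, Cmod_R, Rabs_pos_eq by (lra || (intro H0; injection H0; lra)). reflexivity. }
    unfold W. rewrite <- Hk2, <- Cmod_mult.
    replace ((RtoC a1 * A - RtoC a2 * B) * (k / 2))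
      with ((V x - RtoC a2 * (B * (k / 2))) - (V x - RtoC a1 * (A * (k / 2)))) by ring.
    eapply Rle_trans; [apply Cmod_sub_le | nra]. }
  assert (HW4 : W <= (a1 * Cmod A + a2 * Cmod B) / 4).
  { apply (Rmult_le_reg_r (Cmod k / 2)); [lra|].
    replace ((a1 * Cmod A + a2 * Cmod B) / 4 * (Cmod k / 2))%R
      with ((a1 * Cmod A + a2 * Cmod B) * (Cmod k / 8))%R by field. exact HW. }
  pose proof (Cmod_sub_sq_non_acute a1 a2 A B ltac:(lra) ltac:(lra) Hre) as Hsq. fold W in Hsq.
  set (u := (a1 * Cmod A)%R) in *. set (v := (a2 * Cmod B)%R) in *.
  assert (0 < u) by (unfold u; nra). assert (0 <= v) by (unfold v; nra).
  assert (0 <= W) by apply Cmod_ge_0.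
  assert (W * W <= (u + v) / 4 * ((u + v) / 4)) by (apply Rmult_le_compat; lra).
  assert (0 <= (u - v) * (u - v)) by nra. assert (0 < u * u) by nra.
  nra.
Qed.

Lemma V_zero_disc z r k z1 : simple_root_ball z r k -> V z = 0 -> V z1 = 0 ->
  Cmod (z1 - z) < r / 4 ->
  forall x, Cmod (x - (z + z1) / 2) <= Cmod (z1 - z) / 2 -> V x = 0.
Proof.
  intros Hg Hvz Hv1 Hz1 x Hx. pose proof Hg as [Hr _].
  set (c := (z + z1) / 2) in *. set (d := (z1 - z) / 2).
  assert (Hd : Cmod d = (Cmod (z1 - z) / 2)%R).
  { unfold d. rewrite Cmod_div, Cmod_R, Rabs_pos_eq by (lra || (intro H0; injection H0; lra)).
    reflexivity. }
  rewrite <- Hd in Hx.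
  assert (Hxz : Cmod (x - z) < r).
  { replace (x - z) with ((x - c) + d) by (unfold c, d; field).
    eapply Rle_lt_trans; [apply Cmod_triangle | lra]. }
  apply (V_zero_of_non_acute z r k z z1 x Hg); [rewrite Cmod_sub_diag; lra | lra | exact Hxz
                                             | exact Hvz | exact Hv1 |].
  replace (x - z) with ((x - c) + d) by (unfold c, d; field).
  replace (x - z1) with ((x - c) - d) by (unfold c, d; field).
  replace (Re (Cconj (x - c + d) * (x - c - d)))
    with (Cmod (x - c) * Cmod (x - c) - Cmod d * Cmod d)%R
    by (rewrite !Cmod_sq; destruct (x - c), d; simpl; ring).
  pose proof (Cmod_ge_0 (x - c)). pose proof (Cmod_ge_0 d). nra.
Qed.

Definition rot_p : C := ((1/2)%R, (1/2)%R).
Definition rot_m : C := ((1/2)%R, (-1/2)%R).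

(* [x] sees the two points [c + (x - c) rot_p] and [c + (x - c) rot_m], which are [sqrt 2]
   times closer to [c], under a right angle. *)
Lemma V_zero_disc_grow z r k c s x : simple_root_ball z r k ->
  Cmod (x - c) * Cmod (x - c) <= 2 * s -> Cmod (c - z) + Cmod (x - c) < r ->
  (forall u, Cmod (u - c) * Cmod (u - c) <= s -> Cmod (u - c) <= Cmod (x - c) -> V u = 0) ->
  V x = 0.
Proof.
  intros Hg Hx Hr Hs. set (y := x - c) in *.
  assert (Hrot : forall h, (Cmod h * Cmod h = 1/2)%R ->
            Cmod (c + y * h - z) < r /\ V (c + y * h) = 0).
  { intros h Hh.
    assert (Hyh : (Cmod (y * h) * Cmod (y * h) = Cmod y * Cmod y / 2)%R)
      by (rewrite Cmod_mult; replace (Cmod y * Cmod h * (Cmod y * Cmod h))%R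
            with (Cmod y * Cmod y * (Cmod h * Cmod h))%R by ring; rewrite Hh; field).
    assert (Cmod (y * h) <= Cmod y).
    { pose proof (Cmod_ge_0 (y * h)). pose proof (Cmod_ge_0 y). nra. }
    split.
    - replace (c + y * h - z) with ((c - z) + y * h) by ring.
      eapply Rle_lt_trans; [apply Cmod_triangle | lra].
    - apply Hs; replace (c + y * h - c) with (y * h) by ring; nra. }
  assert (Hp : (Cmod rot_p * Cmod rot_p = 1/2)%R) by (rewrite Cmod_sq; unfold rot_p; simpl; field).
  assert (Hm : (Cmod rot_m * Cmod rot_m = 1/2)%R) by (rewrite Cmod_sq; unfold rot_m; simpl; field).
  destruct (Hrot rot_p Hp) as [Hpz Hvp]. destruct (Hrot rot_m Hm) as [Hmz Hvm].
  apply (V_zero_of_non_acute z r k _ _ x Hg Hpz Hmz); [| exact Hvp | exact Hvm |].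
  - replace (x - z) with ((c - z) + y) by (unfold y; ring).
    eapply Rle_lt_trans; [apply Cmod_triangle | lra].
  - assert (Hpm : rot_m = 1 - rot_p) by (unfold rot_p, rot_m, Cminus, Cplus, Copp; simpl; f_equal; field).
    replace (x - (c + y * rot_p)) with (y * rot_m) by (rewrite Hpm; unfold y; ring).
    replace (x - (c + y * rot_m)) with (y * rot_p) by (rewrite Hpm; unfold y; ring).
    replace (Re (Cconj (y * rot_m) * (y * rot_p))) with 0%R
      by (destruct y; unfold rot_m, rot_p; simpl; field).
    lra.
Qed.

Lemma V_zero_dichotomy z r k : simple_root_ball z r k -> V z = 0 ->
  (forall w, 0 < Cmod (w - z) < r / 4 -> V w <> 0) \/
  (forall w, Cmod (w - z) < 3 * r / 8 -> V w = 0).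
Proof.
  intros Hg Hvz.
  destruct (classic (forall w, 0 < Cmod (w - z) < r / 4 -> V w <> 0)) as [|Hnot]; [left; assumption|].
  right. apply not_all_ex_not in Hnot. destruct Hnot as [z1 Hz1].
  apply imply_to_and in Hz1. destruct Hz1 as [Hd Hv1]. apply NNPP in Hv1.
  pose proof Hg as [Hr _].
  set (c := (z + z1) / 2). set (rho := (Cmod (z1 - z) / 2)%R).
  assert (Hrho : 0 < rho < r / 8) by (unfold rho; lra).
  assert (Hcz : Cmod (c - z) = rho).
  { replace (c - z) with ((z1 - z) / 2) by (unfold c; field).
    rewrite Cmod_div, Cmod_R, Rabs_pos_eq by (lra || (intro H0; injection H0; lra)). reflexivity. }
  assert (Hind : forall n x, Cmod (x - c) * Cmod (x - c) <= 2 ^ n * (rho * rho) ->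
                   Cmod (x - c) <= r / 2 -> V x = 0).
  { induction n as [|n IHn]; intros x Hx1 Hx2; simpl in Hx1.
    - apply (V_zero_disc z r k z1 Hg Hvz Hv1 ltac:(lra)).
      fold c. pose proof (Cmod_ge_0 (x - c)). unfold rho in *. nra.
    - apply (V_zero_disc_grow z r k c (2 ^ n * (rho * rho)) x Hg); [lra | lra |].
      intros u Hu1 Hu2. apply IHn; lra. }
  destruct (INR_unbounded ((r / 2) * (r / 2) / (rho * rho))%R) as [N HN].
  assert (HN2 : INR N <= 2 ^ N).
  { clear. induction N as [|N IH]; [simpl; lra|].
    rewrite S_INR. simpl. pose proof (pow_R1_Rle 2 N ltac:(lra)). lra. }
  intros w Hw.
  assert (Hwc : Cmod (w - c) <= r / 2).
  { replace (w - c) with ((w - z) - (c - z)) by ring.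
    eapply Rle_trans; [apply Cmod_sub_le | lra]. }
  apply (Hind N w); [|exact Hwc].
  assert (0 < rho * rho) by nra.
  assert ((r / 2) * (r / 2) <= 2 ^ N * (rho * rho)).
  { assert ((r / 2) * (r / 2) / (rho * rho) < 2 ^ N) by lra.
    apply (Rmult_lt_compat_r (rho * rho)) in H0; [|lra].
    unfold Rdiv in H0. rewrite Rmult_assoc, Rinv_l in H0 by lra. lra. }
  pose proof (Cmod_ge_0 (w - c)). nra.
Qed.

Lemma Cdiff_V_isolated_zero z r k : simple_root_ball z r k -> V z = 0 ->
  (forall w, 0 < Cmod (w - z) < r / 4 -> V w <> 0) -> Cdiff V z (G (P z)).
Proof.
  intros [Hr [_ [HDb _]]] Hvz Hiso eps Heps.
  assert (Hz : D z) by (apply HDb; rewrite Cmod_sub_diag; lra).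
  destruct (Cdiff_cont _ _ _ (Cdiff_GP z Hz) eps Heps) as [d [Hd Hc]].
  exists (Rmin d (r / 4)). split; [apply Rmin_case; lra|]. intros y Hy.
  pose proof (Rmin_l d (r / 4)). pose proof (Rmin_r d (r / 4)).
  destruct (Ceq_dec y z) as [->|Hne].
  { replace (V z - V z - (z - z) * G (P z)) with (RtoC 0) by ring.
    rewrite Cmod_sub_diag, Cmod_R, Rabs_R0. lra. }
  assert (Hb : 0 < Cmod (y - z)).
  { apply Cmod_gt_0. intro Hb0. apply Hne. replace y with (y - z + z) by ring.
    rewrite Hb0. ring. }
  assert (Hseg : forall t, 0 <= t <= 1 -> Cmod (z + RtoC t * (y - z) - z) = (t * Cmod (y - z))%R).
  { intros t Ht. replace (z + RtoC t * (y - z) - z) with (RtoC t * (y - z)) by ring.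
    rewrite Cmod_Rmult, Rabs_pos_eq by lra. reflexivity. }
  rewrite Rmult_comm. apply (Cmod_mean_value_segment V (fun w => G (P w))); intros t Ht.
  - apply V_cont, HDb. rewrite Hseg by lra. nra.
  - apply Cdiff_V_nonzero; [apply HDb; rewrite Hseg by lra; nra|].
    apply Hiso. rewrite Hseg by lra. split; nra.
  - left. apply Hc. rewrite Hseg by lra. nra.
Qed.

Lemma P_locally_const_of_V_zero w rho : 0 < rho ->
  (forall y, Cmod (y - w) < rho -> D y /\ V y = 0) -> Cinterior (fun y => D y /\ P y = P w) w.
Proof.
  intros Hrho Hb. exists rho. split; [exact Hrho|]. intros y Hy. split; [apply Hb, Hy|].
  assert (Hseg : forall t, 0 <= t <= 1 -> Cmod (w + RtoC t * (y - w) - w) < rho).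
  { intros t Ht. apply ball_convex; [rewrite Cmod_sub_diag; lra | exact Hy | exact Ht]. }
  assert (Hm : Cmod (P y - P w - (y - w) * 0) <= Cmod (y - w) * 0).
  { apply (Cmod_mean_value_segment P V); intros t Ht.
    - apply P_cont, Hb, Hseg. lra.
    - apply P_diff, Hb, Hseg. lra.
    - destruct (Hb _ (Hseg t ltac:(lra))) as [_ ->].
      replace (0 - 0) with (RtoC 0) by ring. rewrite Cmod_R, Rabs_R0. lra. }
  replace (P y - P w - (y - w) * 0) with (P y - P w) in Hm by ring.
  assert (H0 : Cmod (P y - P w) = 0%R) by (pose proof (Cmod_ge_0 (P y - P w)); lra).
  apply Cmod_eq_0 in H0. replace (P y) with (P y - P w + P w) by ring. rewrite H0. ring.
Qed.

Hypothesis D_connected : Cconnected D.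
Hypothesis P_nonconst : exists z1 z2, D z1 /\ D z2 /\ P z1 <> P z2.

Lemma Cinterior_P_eq_closed c w : D w ->
  (forall rho, 0 < rho -> exists y, Cmod (y - w) < rho /\ Cinterior (fun x => D x /\ P x = c) y) ->
  Cinterior (fun x => D x /\ P x = c) w.
Proof.
  intros Hw Hacc. set (U := Cinterior (fun x => D x /\ P x = c)) in *.
  assert (HU : forall y, U y -> V y = 0 /\ P y = c).
  { intros y [rho [Hrho Hy]]. destruct (Hy y) as [HDy HPy]; [rewrite Cmod_sub_diag; lra|].
    split; [|exact HPy].
    apply (Cdiff_locally_const_eq0 P y (V y) c rho Hrho); [apply Hy | apply P_diff, HDy]. }
  assert (Hvw : V w = 0).
  { apply (Ccont_limit_point V w 0 (V_cont w Hw)). intros rho Hrho.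
    destruct (Hacc rho Hrho) as [y [Hy HUy]]. exists y. split; [exact Hy | apply HU, HUy]. }
  assert (Hpw : P w = c).
  { apply (Ccont_limit_point P w c (P_cont w Hw)). intros rho Hrho.
    destruct (Hacc rho Hrho) as [y [Hy HUy]]. exists y. split; [exact Hy | apply HU, HUy]. }
  unfold U. rewrite <- Hpw. destruct (Ceq_dec (F' (P w)) 0) as [Hf|Hf].
  - apply P_locally_const_at_double_root; assumption.
  - destruct (simple_root_ball_exists w Hw Hf) as [r Hg].
    pose proof Hg as [Hr [_ [HDb _]]].
    destruct (V_zero_dichotomy w r _ Hg Hvw) as [Hiso|Hball].
    + destruct (Hacc (r / 4)%R ltac:(lra)) as [y [Hy HUy]].
      destruct (Ceq_dec y w) as [<-|Hne]; [rewrite Hpw; exact HUy|]. exfalso.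
      apply (Hiso y); [|apply HU, HUy]. split; [|exact Hy].
      apply Cmod_gt_0. intro H0. apply Hne. replace y with (y - w + w) by ring. rewrite H0. ring.
    + apply (P_locally_const_of_V_zero w (3 * r / 8)); [lra|].
      intros y Hy. split; [apply HDb; lra | apply Hball, Hy].
Qed.

(* The set where [P] is locally equal to [c] is open and, by [Cinterior_P_eq_closed], closed
   in [D]. *)
Lemma P_not_locally_const c zs : D zs -> ~ Cinterior (fun x => D x /\ P x = c) zs.
Proof.
  intros Hzs Hc. set (U := Cinterior (fun x => D x /\ P x = c)) in *.
  set (W := Cinterior (fun x => ~ U x)).
  assert (HUc : forall y, U y -> P y = c).
  { intros y [rho [Hrho Hy]]. apply Hy. rewrite Cmod_sub_diag. exact Hrho. }
  assert (Hcover : forall w, D w -> U w \/ W w).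
  { intros w Hw. destruct (classic (W w)) as [|HnW]; [right; assumption|left].
    apply Cinterior_P_eq_closed; [exact Hw|]. intros rho Hrho.
    apply NNPP. intro Hno. apply HnW. exists rho. split; [exact Hrho|].
    intros x Hx HUx. apply Hno. exists x. split; assumption. }
  destruct (D_connected U W (Copen_Cinterior _) (Copen_Cinterior _) Hcover)
    as [w [_ [HUw [rho [Hrho Hno]]]]].
  - exists zs. split; assumption.
  - destruct P_nonconst as [z1 [z2 [H1 [H2 H12]]]].
    destruct (Ceq_dec (P z1) c) as [Hc1|Hc1]; [exists z2 | exists z1]; split; try assumption.
    + destruct (Hcover z2 H2) as [HU2|]; [|assumption].
      exfalso. apply H12. rewrite Hc1, HUc; [reflexivity | exact HU2].
    + destruct (Hcover z1 H1) as [HU1|]; [|assumption].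
      exfalso. apply Hc1, HUc, HU1.
  - apply (Hno w); [rewrite Cmod_sub_diag; exact Hrho | exact HUw].
Qed.

Lemma Cdiff_V w : D w -> Cdiff V w (G (P w)).
Proof.
  intros Hw. destruct (Ceq_dec (V w) 0) as [Hv|Hv]; [|apply Cdiff_V_nonzero; assumption].
  destruct (Ceq_dec (F' (P w)) 0) as [Hf|Hf].
  { exfalso. apply (P_not_locally_const (P w) w Hw), P_locally_const_at_double_root; assumption. }
  destruct (simple_root_ball_exists w Hw Hf) as [r Hg].
  pose proof Hg as [Hr [_ [HDb _]]].
  destruct (V_zero_dichotomy w r _ Hg Hv) as [Hiso|Hball].
  - eapply Cdiff_V_isolated_zero; eassumption.
  - exfalso. apply (P_not_locally_const (P w) w Hw), (P_locally_const_of_V_zero w (3 * r / 8)); [lra|].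
    intros y Hy. split; [apply HDb; lra | apply Hball, Hy].
Qed.

End WeierstrassEquation.

Theorem mainTheorem3 (a0 b0 C0 C1 g3 z0 : C) (D : C -> Prop) (P P' : C -> C) :
  b0 <> 0 ->
  is_wp_on ((C0 * C0 + 24 * C1 * b0) / (12 * (b0 * b0))) g3 D P P' ->
  let y := fun z => - (C0 / (12 * b0)) + P (z - z0) in
  exists y1 y2 y3 : C -> C,
    forall z, D (z - z0) ->
      Cderiv y z (y1 z) /\ Cderiv y1 z (y2 z) /\ Cderiv y2 z (y3 z) /\
      a0 * y3 z - 12 * a0 * y z * y1 z + b0 * y2 z - (a0 * C0 / b0) * y1 z
        - 6 * b0 * (y z * y z) - C0 * y z + C1 = 0.
Proof.
  intros Hb0 [Hopen [Hconn [_ [Hder [Hnc Hode]]]]] y.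
  set (g2 := (C0 * C0 + 24 * C1 * b0) / (12 * (b0 * b0))) in *.
  assert (HD : forall w, D w -> Cinterior D w) by (apply Copen_Cinterior_iff, Hopen).
  assert (HP : forall w, D w -> Cdiff P w (P' w)) by (intros w Hw; apply Cderiv_Cdiff, Hder, Hw).
  exists (fun z => P' (z - z0)), (fun z => G g2 (P (z - z0))),
         (fun z => 12 * P (z - z0) * P' (z - z0)).
  intros z Hz. rewrite !Cderiv_Cdiff. split; [|split; [|split]].
  - apply (Cdiff_val _ _ (0 + P' (z - z0))); [ring|].
    apply (Cdiff_plus (fun _ => - (C0 / (12 * b0))) (fun x => P (x - z0))).
    + apply Cdiff_const.
    + apply Cdiff_shift, HP, Hz.
  - apply (Cdiff_shift P'), (Cdiff_V g2 g3 D P P' HD HP Hode Hconn Hnc), Hz.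
  - apply (Cdiff_shift (fun x => G g2 (P x))).
    apply (Cdiff_val _ _ (P' (z - z0) * (12 * P (z - z0)))); [ring|].
    apply (Cdiff_GP g2 D P P' HP), Hz.
  - unfold y, G, g2. field. exact Hb0.
Qed.
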